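(* Let $T$ be a pruned group tree and $X$ a Polish $G_T$-space. Then there is a Borel injective map $f:X\to\mathbb{R}^T$ that is equivariant: $g\cdot f(x)=f(g\cdot x)$ for all $g\in G_T$ and $x\in X$.
   Context: Fix countable groups $(\Delta_i)_{i\in\omega}$ and let $\Delta^n=\prod_{i<n}\Delta_i$ ($\Delta^0$ trivial). A group tree is a set $T\subseteq\bigcup_n\Delta^n$ closed under initial segments such that each $T^n:=T\cap\Delta^n$ is a subgroup of $\Delta^n$; it is pruned if every element of $T$ has a proper extension in $T$. $\ell(a)$ is the length of $a\in T$, and products/inverses of tuples of equal length $n$ are taken in $T^n$. $G_T$ is the closed subgroup of $\prod_i\Delta_i$ (product of discrete groups) consisting of those $g$ with $g\upharpoonright n\in T$ for all $n$. $\mathbb{R}^T$ carries the product topology ($T$ countable), and $G_T$ acts on it by $(g\cdot\mathbf{x})(b)=\mathbf{x}((g\upharpoonright\ell(b))^{-1}\cdot b)$. A Polish $G_T$-space is a Polish space with a continuous $G_T$-action. *)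

From HB Require Import structures.
From mathcomp Require Import all_boot all_order all_algebra.
From mathcomp Require Import all_classical all_reals all_analysis.
From mathcomp Require Import Rstruct Rstruct_topology.
From Stdlib Require Import Rdefinitions.

Unset Printing Implicit Defensive.

Local Open Scope classical_set_scope.

Record cgroup := CGroup {
  cg_sort :> countType;
  cg_mul : cg_sort -> cg_sort -> cg_sort;
  cg_inv : cg_sort -> cg_sort;
  cg_one : cg_sort;
  cg_mulA : forall x y z, cg_mul x (cg_mul y z) = cg_mul (cg_mul x y) z;
  cg_mul1g : forall x, cg_mul cg_one x = x;
  cg_mulVg : forall x, cg_mul (cg_inv x) x = cg_one
}.
Arguments cg_mul {c}. Arguments cg_inv {c}.

Section GroupTrees.
Variable D : nat -> cgroup.

Definition tup (n : nat) := forall i : 'I_n, D i.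

Definition restr {n m : nat} (H : (m <= n)%N) (a : tup n) : tup m :=
  fun i => a (widen_ord H i).

Definition tone n : tup n := fun i => cg_one (D i).
Definition tmul {n} (a b : tup n) : tup n := fun i => cg_mul (a i) (b i).
Definition tinv {n} (a : tup n) : tup n := fun i => cg_inv (a i).

(** T is given by its levels T^n = T n, a predicate on Delta^n. *)
Definition group_tree (T : forall n, tup n -> Prop) : Prop :=
  (forall n m (H : (m <= n)%N) (a : tup n), T n a -> T m (restr H a)) /\
  (forall n, T n (tone n)) /\
  (forall n (a b : tup n), T n a -> T n b -> T n (tmul a b)) /\
  (forall n (a : tup n), T n a -> T n (tinv a)).

Definition pruned (T : forall n, tup n -> Prop) : Prop :=
  forall n (a : tup n), T n a ->
    exists m (H : (n < m)%N) (b : tup m), T m b /\ restr (ltnW H) b = a.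

Record node (T : forall n, tup n -> Prop) := Node {
  nlen : nat; ntup : tup nlen; nin : T nlen ntup }.
Arguments nlen {T}. Arguments ntup {T}. Arguments nin {T}. Arguments Node {T}.

Definition dseq := forall i : nat, D i.
Definition gres (g : dseq) n : tup n := fun i => g i.
Definition gone : dseq := fun i => cg_one (D i).
Definition gmul (g h : dseq) : dseq := fun i => cg_mul (g i) (h i).

Definition inGT (T : forall n, tup n -> Prop) (g : dseq) : Prop :=
  forall n, T n (gres g n).

Lemma node_act_in {T} (hT : group_tree T) {g} (hg : inGT T g) (b : node T) :
  T (nlen b) (tmul (tinv (gres g (nlen b))) (ntup b)).
Proof.
case: hT => _ [_ [hM hI]]; apply: hM; [apply: hI; exact: hg | exact: nin].
Qed.

Definition node_act {T} (hT : group_tree T) {g} (hg : inGT T g) (b : node T)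
  : node T := Node _ _ (node_act_in hT hg b).

Definition RT_act {T} (hT : group_tree T) {g} (hg : inGT T g)
  (x : node T -> R) : node T -> R := fun b => x (node_act hT hg b).

(** a continuous action of G_T on a topological space X, where G_T carries
    the subspace topology of the product of the discrete groups Delta_i:
    the sets {h in G_T | h|n = g|n} form a neighbourhood basis of g. *)
Definition continuous_GT_action (T : forall n, tup n -> Prop)
  (X : topologicalType) (a : dseq -> X -> X) : Prop :=
  (forall x, a gone x = x) /\
  (forall g h x, inGT T g -> inGT T h -> a (gmul g h) x = a g (a h x)) /\
  (forall g x, inGT T g -> forall U, nbhs (a g x) U ->
     exists n, exists2 V, nbhs x V &
       forall h y, inGT T h -> gres h n = gres g n -> V y -> U (a h y)).

End GroupTrees.
Arguments restr {D n m}. Arguments tone {D}. Arguments tmul {D n}. Arguments tinv {D n}.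
Arguments group_tree {D}. Arguments pruned {D}. Arguments node {D}.
Arguments nlen {D T}. Arguments ntup {D T}. Arguments nin {D T}. Arguments Node {D T}.
Arguments gres {D}. Arguments gone {D}. Arguments gmul {D}. Arguments inGT {D}.
Arguments node_act_in {D T} hT {g}. Arguments node_act {D T} hT {g}. Arguments RT_act {D T} hT {g}.
Arguments continuous_GT_action {D} T {X}.

Definition polish (X : topologicalType) : Prop :=
  (exists S : set X, countable S /\ closure S = setT) /\
  exists d : X -> X -> R,
    (forall x y, (0 <= d x y)%R) /\
    (forall x y, d x y = 0%R <-> x = y) /\
    (forall x y, d x y = d y x) /\
    (forall x y z, (d x z <= d x y + d y z)%R) /\
    (forall A : set X, open A <->
       forall x, A x -> exists2 e : R, (0 < e)%R & [set y | (d x y < e)%R] `<=` A) /\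
    (forall u : nat -> X,
       (forall e : R, (0 < e)%R -> exists N, forall m n, (N <= m)%N -> (N <= n)%N ->
          (d (u m) (u n) < e)%R) ->
       exists l : X, u @ \oo --> l).

Definition borel_fun (X Y : topologicalType) (f : X -> Y) : Prop :=
  forall U : set Y, open U -> <<s [set A : set X | open A] >> (f @^-1` U).
Arguments borel_fun {X Y}.

(* Fix open sets W_n (n in nat) such that every neighbourhood of every point
   contains, at arbitrarily large levels n, some W_n around that point: a
   countable base in which every member recurs cofinally often.  For a node
   c in T^n let O_c be the set of x that some h in G_T with h|n = c^-1 moves
   into W_n, and send x to the indicator function of c |-> [x in O_c].  Every
   O_c is open and T is countable, so this map is Borel; it is equivariant
   because O_((g|n)^-1 c) = g^-1 O_c.  For injectivity let x <> y.  Continuity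
   of the action at (1, x) gives m and a neighbourhood V of x that every
   h in G_T with h|m = 1 maps into a neighbourhood of x avoiding y.  Take
   W_n inside V around x with n >= m: then x is in O_(1_n), but y is not,
   for if h|n = 1 and h y in W_n then y = h^-1 (h y) would lie in that
   neighbourhood. *)

From mathcomp Require Import all_boot all_order all_algebra.
From mathcomp Require Import all_classical all_reals all_analysis.
From mathcomp Require Import Rstruct Rstruct_topology.
From Stdlib Require Import Rdefinitions RIneq Cantor Lia Lra.

Local Open Scope classical_set_scope.

Section GeneratedSigmaAlgebra.
Variables (T : Type) (G : set (set T)).

Lemma sigma_algebraT : <<s G >> setT.
Proof.
by have := @sigma_algebraCD _ setT G set0 (@sigma_algebra0 _ setT G); rewrite setD0.
Qed.

Lemma sigma_algebraCT A : <<s G >> A -> <<s G >> (~` A).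
Proof. by move=> GA; rewrite -setTD; exact: sigma_algebraCD. Qed.

Lemma sigma_algebraI A B : <<s G >> A -> <<s G >> B -> <<s G >> (A `&` B).
Proof.
move=> GA GB; rewrite -[A `&` B]setCK setCI -bigcup2E; apply: sigma_algebraCT.
by apply: sigma_algebra_bigcup => -[|[|n]] /=;
  [exact: sigma_algebraCT.. | exact: sigma_algebra0].
Qed.

Lemma sigma_algebra_bigcup_countable (J : countType) (P : set J) (F : J -> set T) :
  (forall j, P j -> <<s G >> (F j)) -> <<s G >> (\bigcup_(j in P) F j).
Proof.
move=> GF.
pose A n := if unpickle n is Some j then (if `[< P j >] then F j else set0)
            else set0.
have -> : \bigcup_(j in P) F j = \bigcup_n A n.
  apply/seteqP; split=> [x [j Pj Fx]|x [n _]].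
    by exists (pickle j) => //; rewrite /A pickleK; case: asboolP.
  by rewrite /A; case: (unpickle n) => // j; case: asboolP => // Pj Fx; exists j.
apply: sigma_algebra_bigcup => n; rewrite /A.
case: (unpickle n) => [j|]; last exact: sigma_algebra0.
by case: ifPn => [/asboolP/GF //|_]; exact: sigma_algebra0.
Qed.

End GeneratedSigmaAlgebra.

Lemma ptws_nbhs_cylinder {I : Type} {Y : topologicalType} {phi : {ptws I -> Y}}
    {U : set {ptws I -> Y}} :
  nbhs phi U -> exists2 A : set I, finite_set A &
    forall psi : {ptws I -> Y}, (forall i, A i -> psi i = phi i) -> U psi.
Proof.
pose F : set_system {ptws I -> Y} :=
  [set B | exists2 A : set I, finite_set A &
    forall psi : {ptws I -> Y}, (forall i, A i -> psi i = phi i) -> B psi].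
have FF : Filter F.
  split; first by exists set0.
    move=> B C [A1 fA1 HB] [A2 fA2 HC].
    exists (A1 `|` A2); first by rewrite finite_setU.
    by move=> psi H; split; [apply: HB | apply: HC] => i Ai; apply: H; [left|right].
  by move=> B C BC [A fA HB]; exists A => // psi /HB /BC.
suff : F --> phi by move/(_ U).
apply/cvg_sup => i; apply/cvg_image.
  by apply/seteqP; split=> // y _; exists (fun _ => y).
move=> B nB /=; exists [set psi | B (psi i)].
  exists [set i]; first exact: finite_set1.
  by move=> psi /(_ i erefl) /= ->; exact: nbhs_singleton.
by apply/seteqP; split=> [y [psi Bpsi <-] // | y By]; exists (fun _ => y).
Qed.

Section Indicators.
Context {X : topologicalType} {I : Type} (O : I -> set X).

Definition indicators (x : X) : {ptws I -> R} := fun i => indic (O i) x.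

Lemma sigma_mem_eq (A : set X) (b : bool) :
  open A -> <<s open >> [set y | (y \in A) = b].
Proof.
move=> oA; rewrite (_ : [set y | _] = if b then A else ~` A).
  by case: b; [|apply: sigma_algebraCT]; exact: sub_sigma_algebra.
apply/seteqP; case: b; split=> y /=; first exact: set_mem; first exact: mem_set.
  by move=> yA /mem_set; rewrite yA.
exact: memNset.
Qed.

(* Re-indexing [O] by [nat] lets the patterns below range over the countable
   type [seq (nat * bool)]. *)
Section CodedPatterns.
Variables (iota : I -> nat) (iotaI : injective iota).

Definition coded_open (k : nat) : set X := \bigcup_(i in iota @^-1` [set k]) O i.

Lemma coded_openE i : coded_open (iota i) = O i.
Proof.
rewrite /coded_open (_ : iota @^-1` [set iota i] = [set i]) ?bigcup_set1 //.
by apply/seteqP; split=> [j /iotaI|j ->].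
Qed.

Definition pattern (L : seq (nat * bool)) : set X :=
  [set y | forall kb, kb \in L -> (y \in coded_open kb.1) = kb.2].

Lemma sigma_pattern L : (forall i, open (O i)) -> <<s open >> (pattern L).
Proof.
move=> oO; elim: L => [|[k b] L IH].
  rewrite (_ : pattern [::] = setT); first exact: sigma_algebraT.
  by apply/seteqP; split=> // y _ kb.
rewrite (_ : pattern _ = [set y | (y \in coded_open k) = b] `&` pattern L).
  by apply: sigma_algebraI => //; apply: sigma_mem_eq; exact: bigcup_open.
apply/seteqP; split=> y.
  move=> Ly; split; first by apply: (Ly (k, b)); rewrite mem_head.
  by move=> kb kbL; apply: Ly; rewrite inE kbL orbT.
by case=> yk yL kb; rewrite inE => /predU1P[-> //|/yL].
Qed.

Lemma indicators_pattern x {A : set I} : finite_set A -> exists L, pattern L x /\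
  forall y, pattern L y -> forall i, A i -> indicators y i = indicators x i.
Proof.
move=> /(finite_image iota)/finite_seqP[s sE].
exists [seq (k, x \in coded_open k) | k <- s].
split=> [kb /mapP[k _ ->] //|y Ly i Ai].
rewrite /indicators /indic -coded_openE.
rewrite (Ly (iota i, x \in coded_open (iota i))) //; apply/mapP.
by exists (iota i) => //; have : [set` s] (iota i) by rewrite -sE; exists i.
Qed.

End CodedPatterns.

Lemma borel_indicators : (forall i, open (O i)) -> countable [set: I] ->
  borel_fun indicators.
Proof.
move=> oO /countable_injP[iota iotaI] U oU.
have {}iotaI : injective iota := fun i j => iotaI i j (in_setT i) (in_setT j).
have -> : indicators @^-1` U =
    \bigcup_(L in [set L | pattern iota L `<=` indicators @^-1` U]) pattern iota L.
  apply/seteqP; split=> [x Ux|x [L sub /sub //]].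
  have [A fA cyl] := ptws_nbhs_cylinder (open_nbhs_nbhs (conj oU Ux)).
  have [L [Lx LA]] := indicators_pattern _ iotaI x fA.
  by exists L => // y /LA eq; apply: cyl => i /eq.
by apply: sigma_algebra_bigcup_countable => L _; exact: sigma_pattern.
Qed.

End Indicators.

Section CGroupTheory.
Variable G : cgroup.
Implicit Types x y : G.

Lemma cg_mulgV x : cg_mul x (cg_inv x) = cg_one G.
Proof.
rewrite -[cg_mul x _]cg_mul1g -(cg_mulVg _ (cg_inv x)) -cg_mulA.
by rewrite (cg_mulA _ (cg_inv x) x) cg_mulVg cg_mul1g cg_mulVg.
Qed.

Lemma cg_mulg1 x : cg_mul x (cg_one G) = x.
Proof. by rewrite -(cg_mulVg _ x) cg_mulA cg_mulgV cg_mul1g. Qed.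

Lemma cg_invg_unique x y : cg_mul y x = cg_one G -> y = cg_inv x.
Proof. by move=> yx1; rewrite -(cg_mulg1 y) -(cg_mulgV x) cg_mulA yx1 cg_mul1g. Qed.

Lemma cg_invg1 : cg_inv (cg_one G) = cg_one G.
Proof. by symmetry; apply: cg_invg_unique; rewrite cg_mul1g. Qed.

Lemma cg_invgK x : cg_inv (cg_inv x) = x.
Proof. by symmetry; apply: cg_invg_unique; rewrite cg_mulgV. Qed.

Lemma cg_invMg x y : cg_inv (cg_mul x y) = cg_mul (cg_inv y) (cg_inv x).
Proof.
symmetry; apply: cg_invg_unique.
by rewrite -cg_mulA (cg_mulA _ (cg_inv x) x) cg_mulVg cg_mul1g cg_mulVg.
Qed.

End CGroupTheory.

Definition recurrent_base {X : topologicalType} (W : nat -> set X) : Prop :=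
  forall (x : X) (V : set X) (m : nat), nbhs x V ->
    exists n, [/\ (m <= n)%N, W n x & W n `<=` V].

Lemma recurrent_base_repeat (X : topologicalType) (B : nat -> set X) :
  (forall (x : X) V, nbhs x V -> exists k, B k x /\ B k `<=` V) ->
  recurrent_base (fun n => B (Cantor.of_nat n).2).
Proof.
move=> baseB x V m /baseB[k [Bx BV]]; exists (Cantor.to_nat (m, k)).
rewrite Cantor.cancel_of_to; split=> //; apply/leP.
have := Cantor.to_nat_non_decreasing m k; lia.
Qed.

Section TranslatedOpenSets.
Context {D : nat -> cgroup} (T : forall n, tup D n -> Prop) (hT : group_tree T).
Context {X : topologicalType} (a : dseq D -> X -> X).
Hypothesis ha : continuous_GT_action T a.

Definition ginv (g : dseq D) : dseq D := fun i => cg_inv (g i).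

Lemma inGT_one : inGT T (@gone D).
Proof. by case: hT => _ [Tone _] n; exact: Tone. Qed.

Lemma inGT_mul g h : inGT T g -> inGT T h -> inGT T (gmul g h).
Proof. by case: hT => _ [_ [TM _]] Tg Th n; exact: TM. Qed.

Lemma inGT_inv g : inGT T g -> inGT T (ginv g).
Proof. by case: hT => _ [_ [_ TV]] Tg n; exact: TV. Qed.

Lemma act_mul g h x : inGT T g -> inGT T h -> a g (a h x) = a (gmul g h) x.
Proof. by case: ha => _ [aM _] Tg Th; rewrite aM. Qed.

Lemma act_ginvK g x : inGT T g -> a (ginv g) (a g x) = x.
Proof.
move=> Tg; rewrite act_mul //; last exact: inGT_inv.
rewrite (_ : gmul _ _ = @gone D); first by case: ha.
by apply: functional_extensionality_dep => i; exact: cg_mulVg.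
Qed.

Definition translate (W : set X) {n} (c : tup D n) : set X :=
  [set x | exists h, [/\ inGT T h, gres h n = tinv c & W (a h x)]].

Lemma translate_act (W : set X) n (c : tup D n) g : inGT T g ->
  translate W (tmul (tinv (gres g n)) c) = a g @^-1` translate W c.
Proof.
move=> Tg; apply/seteqP; split=> x [h [Th hc Wh]].
  exists (gmul h (ginv g)); split; [by apply: inGT_mul => //; exact: inGT_inv| |].
    apply: functional_extensionality_dep => i; have := congr1 (fun t => t i) hc.
    rewrite /gres /tinv /tmul /gmul /ginv /= => ->.
    by rewrite cg_invMg cg_invgK -cg_mulA cg_mulgV cg_mulg1.
  rewrite act_mul //; last by apply: inGT_mul => //; exact: inGT_inv.
  congr (W (a _ x)): Wh; apply: functional_extensionality_dep => i.
  by rewrite /gmul /ginv -cg_mulA cg_mulVg cg_mulg1.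
exists (gmul h g); split; [exact: inGT_mul| |by rewrite -act_mul].
apply: functional_extensionality_dep => i; have := congr1 (fun t => t i) hc.
by rewrite /gres /tinv /tmul /gmul /= => ->; rewrite cg_invMg cg_invgK.
Qed.

Lemma open_translate (W : set X) n (c : tup D n) : open W -> open (translate W c).
Proof.
move=> oW; rewrite openE => x [h [Th hc Wh]].
have [_ [_ acont]] := ha.
have [m [V xV hV]] := acont h x Th W (open_nbhs_nbhs (conj oW Wh)).
by apply: filterS xV => y Vy; exists h; split=> //; exact: hV.
Qed.

Lemma translate_tone (W : set X) n (x : X) : W x -> translate W (tone n) x.
Proof.
move=> Wx; exists (@gone D); split; first exact: inGT_one.
  by apply: functional_extensionality_dep => i; rewrite /gres /tinv /tone cg_invg1.
by case: ha => -> _.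
Qed.

Lemma translate_tone_separation {x y : X} {U : set X} : nbhs x U -> ~ U y ->
  exists m, exists2 V, nbhs x V & forall n (W : set X), (m <= n)%N ->
    W `<=` V -> ~ translate W (tone n) y.
Proof.
move=> xU Uy; have [a1 [_ acont]] := ha.
have xU' : nbhs (a (@gone D) x) U by rewrite a1.
have [m [V xV hV]] := acont (@gone D) x inGT_one U xU'.
exists m, V => // n W mn WV [h [Th h1 Wh]]; apply: Uy.
rewrite -(act_ginvK h y Th); apply: hV; [exact: inGT_inv| |exact: WV].
apply: functional_extensionality_dep => i.
have := congr1 (fun t => t (widen_ord mn i)) h1.
by rewrite /gres /tinv /tone /ginv /gone /= => ->; rewrite cg_invgK.
Qed.

Variable W : nat -> set X.

Definition node_translate (b : node T) : set X :=
  translate (W (nlen b)) (ntup b).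

Lemma RT_act_indicators g (Tg : inGT T g) (x : X) :
  RT_act hT Tg (indicators node_translate x) = indicators node_translate (a g x).
Proof.
apply: functional_extensionality_dep => b; rewrite /RT_act /indicators /=.
by rewrite /node_translate /= translate_act.
Qed.

Lemma injective_indicators_translate :
  accessible_space X -> recurrent_base W -> injective (indicators node_translate).
Proof.
move=> T1X recW x y xy; apply: contrapT => /eqP/T1X[A [oA /set_mem xA /set_mem yA]].
have [m [V xV sepV]] := translate_tone_separation (open_nbhs_nbhs (conj oA xA)) yA.
have [n [mn Wx WV]] := recW x V m xV.
have [_ [Tone _]] := hT.
have := congr1 (fun f => f (Node n (tone n) (Tone n))) xy.
rewrite /indicators /indic /node_translate /=.
rewrite (mem_set (translate_tone _ _ _ Wx)) (memNset (sepV n _ mn WV)) /=.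
by move/eqP; rewrite GRing.oner_eq0.
Qed.

End TranslatedOpenSets.

Lemma exists_inv_succ_lt (e : R) : (0 < e)%R -> exists j : nat, (/ INR j.+1 < e)%R.
Proof.
move=> e0; have [j je] := INR_unbounded (/ e); exists j.
rewrite -[e]Rinv_inv; apply: Rinv_lt_contravar; last by rewrite S_INR; lra.
by apply: Rmult_lt_0_compat; [exact: Rinv_0_lt_compat | apply: lt_0_INR; lia].
Qed.

Section MetricSpaces.
Local Open Scope R_scope.
Context {X : topologicalType} {d : X -> X -> R}.
Hypothesis d_ge0 : forall x y, 0 <= d x y.
Hypothesis d_eq0 : forall x y, d x y = 0 <-> x = y.
Hypothesis dC : forall x y, d x y = d y x.
Hypothesis d_tri : forall x y z, d x z <= d x y + d y z.
Hypothesis d_open : forall A : set X, open A <->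
  forall x, A x -> exists2 e : R, 0 < e & [set y | d x y < e] `<=` A.

Lemma dxx x : d x x = 0.
Proof. exact/d_eq0. Qed.

Lemma open_dball s e : open [set z | d s z < e].
Proof.
apply/d_open => z /= sz; exists (e - d s z); first lra.
by move=> y /= zy; have := d_tri s z y; lra.
Qed.

Lemma nbhs_dball x e : 0 < e -> nbhs x [set z | d x z < e].
Proof.
by move=> e0; apply: open_nbhs_nbhs; split; [exact: open_dball | rewrite /= dxx].
Qed.

Lemma nbhs_dball_sub {x : X} {V : set X} :
  nbhs x V -> exists2 e, 0 < e & [set z | d x z < e] `<=` V.
Proof.
rewrite nbhsE => -[B [oB Bx] BV]; have [e e0 eB] := (d_open B).1 oB x Bx.
by exists e => // z /eB /BV.
Qed.

Lemma metric_accessible : accessible_space X.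
Proof.
move=> x y /eqP xy; have xy0 : 0 < d x y.
  have := d_ge0 x y; have : d x y <> 0 by move/d_eq0/xy.
  lra.
exists [set z | d x z < d x y]; split; first exact: open_dball.
  by apply/mem_set; rewrite /= dxx.
by apply/mem_set => /=; lra.
Qed.

Lemma separable_metric_base :
  (exists S : set X, countable S /\ closure S = setT) ->
  exists B : nat -> set X, (forall k, open (B k)) /\
    (forall x V, nbhs x V -> exists k, B k x /\ B k `<=` V).
Proof.
case=> S [/countable_injP[io ioI] dS].
pose r (j : nat) := / INR j.+1.
pose B k := \bigcup_(s in [set s | S s /\ io s = (Cantor.of_nat k).1])
  [set z | d s z < r (Cantor.of_nat k).2].
exists B; split=> [k|x V xV]; first by apply: bigcup_open => s _; exact: open_dball.
have [e e0 eV] := nbhs_dball_sub xV.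
have [j rj] : exists j, r j < e / 2 by apply: exists_inv_succ_lt; lra.
have rj0 : 0 < r j by apply: Rinv_0_lt_compat; apply: lt_0_INR; lia.
have [s [Ss xs]] : exists s, S s /\ d x s < r j.
  have : closure S x by rewrite dS.
  by case/(_ _ (nbhs_dball x _ rj0)) => s [Ss xs]; exists s.
exists (Cantor.to_nat (io s, j)); rewrite /B Cantor.cancel_of_to /=; split.
  by exists s => //=; rewrite dC.
move=> z [s' [Ss' ios's] s'z]; apply: eV => /=.
have es : s' = s by apply: ioI; rewrite ?in_setE.
by subst s'; have := d_tri x s z; rewrite /= in s'z; lra.
Qed.

End MetricSpaces.

Lemma polish_accessible {X : topologicalType} : polish X -> accessible_space X.
Proof.
case=> _ [d [d_ge0 [d_eq0 [_ [d_tri [d_open _]]]]]].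
exact: (metric_accessible d_ge0 d_eq0 d_tri d_open).
Qed.

Lemma polish_recurrent_base {X : topologicalType} : polish X ->
  exists W : nat -> set X, (forall n, open (W n)) /\ recurrent_base W.
Proof.
case=> sepX [d [_ [d_eq0 [dC [d_tri [d_open _]]]]]].
have [B [oB baseB]] := separable_metric_base d_eq0 dC d_tri d_open sepX.
by exists (fun n => B (Cantor.of_nat n).2); split; last exact: recurrent_base_repeat.
Qed.

Lemma countable_node (D : nat -> cgroup) (T : forall n, tup D n -> Prop) :
  countable [set: node T].
Proof.
apply/countable_injP.
exists (fun b => pickle (nlen b, [seq pickle (ntup b i) | i <- enum 'I_(nlen b)])).
move=> [n c Tc] [n' c' Tc'] _ _ /(pcan_inj pickleK) /= [nn'].
subst n' => cc'; have {cc'} cc' : c = c'.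
  apply: functional_extensionality_dep => i; apply: (pcan_inj pickleK).
  by move/eq_in_map: cc' => /(_ i); rewrite mem_enum; apply.
by subst c'; congr Node; exact: Prop_irrelevance.
Qed.

Theorem mainTheorem12 (D : nat -> cgroup) (T : forall n, tup D n -> Prop)
  (hT : group_tree T) (hP : pruned T)
  (X : topologicalType) (a : dseq D -> X -> X)
  (hX : polish X) (ha : continuous_GT_action T a) :
  exists f : X -> {ptws node T -> R},
    borel_fun f /\ injective f /\
    (forall (g : dseq D) (hg : inGT T g) (x : X),
       RT_act hT hg (f x) = f (a g x)).
Proof.
have [W [oW recW]] := polish_recurrent_base hX.
exists (indicators (node_translate T a W)); split; [|split].
- apply: borel_indicators; last exact: countable_node.
  by move=> b; exact: open_translate.
- exact: injective_indicators_translate (polish_accessible hX) recW.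
- exact: RT_act_indicators.
Qed.
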